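(* Each of the following forms graphs is geodesic-transitive: the bilinear forms graph $\mathrm{Bil}(m,k,q)$ ($m\le k$), the alternating forms graph $\mathrm{Alt}(k,q)$, and the Hermitian forms graph $\mathrm{Her}(k,r)$.
   Context: $\mathrm{Bil}(m,k,q)$: vertices are the $m\times k$ matrices over $\mathbb{F}_q$, $X,Y$ adjacent iff $\mathrm{rk}(X-Y)=1$ (equivalently, bilinear maps $\mathbb{F}_q^m\times\mathbb{F}_q^k\to\mathbb{F}_q$). $\mathrm{Alt}(k,q)$: vertices are the skew-symmetric $k\times k$ matrices over $\mathbb{F}_q$ with zero diagonal (alternating forms on $\mathbb{F}_q^k$), $X,Y$ adjacent iff $\mathrm{rk}(X-Y)=2$. $\mathrm{Her}(k,r)$: with $q=r^2$ and $\sigma$ the field automorphism of $\mathbb{F}_q$ of order $2$, vertices are the $k\times k$ Hermitian matrices $M$ over $\mathbb{F}_q$ (i.e. $M^{\mathsf T}=M^{\sigma}$), $X,Y$ adjacent iff $\mathrm{rk}(X-Y)=1$. A geodesic of length $\ell$ is a vertex sequence $(v_0,\dots,v_\ell)$ with consecutive vertices adjacent and $d(v_0,v_\ell)=\ell$; a graph is geodesic-transitive if its automorphism group is transitive on geodesics of each length. *)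

From HB Require Import structures.
From mathcomp Require Import all_boot all_order all_algebra all_fingroup all_field.
Set Implicit Arguments. Unset Strict Implicit. Unset Printing Implicit Defensive.
Import GRing.Theory.
Local Open Scope ring_scope.

Section Graph.
Variables (T : finType) (e : rel T).

Definition walk_len (x y : T) (n : nat) : Prop :=
  exists s : seq T, size s = n /\ path e x s /\ last x s = y.

(* v = (v_0, ..., v_l) is a geodesic of length l = size v - 1:
   consecutive vertices adjacent and d(v_0, v_l) = l, i.e. there is no
   shorter walk from v_0 to v_l. *)
Definition geodesic (v : seq T) : Prop :=
  match v with
  | [::] => False
  | x :: s => path e x s /\ (forall n, (n < size s)%N -> ~ walk_len x (last x s) n)
  end.

Definition graph_aut (g : {perm T}) : Prop := forall x y, e (g x) (g y) = e x y.

Definition geodesic_transitive : Prop :=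
  forall u v : seq T, size u = size v -> geodesic u -> geodesic v ->
    exists g : {perm T}, graph_aut g /\ map g u = v.
End Graph.

Section Forms.
Variable F : finFieldType.

Definition bil_adj (m k : nat) : rel 'M[F]_(m, k) :=
  fun X Y => \rank (X - Y) == 1%N.

Definition alternating (k : nat) (A : 'M[F]_k) : bool :=
  (A^T == - A) && [forall i, A i i == 0].
Definition alt_vertex (k : nat) := {A : 'M[F]_k | alternating A}.
Definition alt_adj (k : nat) : rel (alt_vertex k) :=
  fun X Y => \rank (val X - val Y) == 2%N.

Definition hermitian (sigma : F -> F) (k : nat) (A : 'M[F]_k) : bool :=
  A^T == map_mx sigma A.
Definition her_vertex (sigma : F -> F) (k : nat) := {A : 'M[F]_k | hermitian sigma A}.
Definition her_adj (sigma : F -> F) (k : nat) : rel (her_vertex sigma k) :=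
  fun X Y => \rank (val X - val Y) == 1%N.
End Forms.

From Pilot Require Import Defs.
From HB Require Import structures.
From mathcomp Require Import all_boot all_order all_algebra all_fingroup all_field.
From mathcomp Require Import zify.
Set Implicit Arguments. Unset Strict Implicit. Unset Printing Implicit Defensive.
Import GRing.Theory.
Local Open Scope ring_scope.

(* In all three graphs the distance from X to Y is \rank (X - Y), halved for
   alternating forms, and for invertible P, Q the maps X |-> X0 + P X Q are
   automorphisms (with P = Q^T, resp. P = Q^sigma^T, for alternating, resp.
   Hermitian, forms).  Along a geodesic X_0, ..., X_l each step X_(j+1) - X_j
   has minimal rank, so it is u^T v, p^T q - q^T p, or w^sigma^T w.  Taking these
   vectors as rows of matrices U, V gives X_i - X_0 = U^T S_i V, where S_i is a
   partial identity of rank i or its symplectic analogue; d(X_0, X_l) = l forces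
   U and V to have full row rank, so they are pid_mx times invertible matrices,
   and one automorphism maps the standard geodesic (S_i)_i onto (X_i)_i.
   Minimal-rank summands are split off by Wedderburn's rank-reduction formula;
   for Hermitian forms this needs the norm x x^sigma to map onto the fixed
   field, which follows by counting the fibres of the norm and of x / x^sigma
   and using Hilbert 90. *)

Section DistanceGraph.
Variables (T : finType) (e : rel T) (d : T -> T -> nat).
Hypothesis edge_dist : forall x y, e x y = (d x y == 1)%N.
Hypothesis dist_eq0 : forall x y, (d x y == 0)%N = (x == y).
Hypothesis dist_triangle : forall x y z, (d x z <= d x y + d y z)%N.
Hypothesis dist_step : forall x y n, d x y = n.+1 -> exists2 z, e x z & d z y = n.

Lemma walk_len_dist n x y : d x y = n -> walk_len e x y n.
Proof.
elim: n x => [|n IHn] x dxy.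
  by exists [::]; rewrite (eqP (_ : x == y)) // -dist_eq0 dxy.
have [z exz /IHn[s [size_s [path_s last_s]]]] := dist_step dxy.
by exists (z :: s); rewrite /= size_s exz.
Qed.

Lemma dist_le_walk_len n x y : walk_len e x y n -> (d x y <= n)%N.
Proof.
elim: n x => [|n IHn] x [[|z s] [//= size_s [path_s last_s]]].
  by rewrite -last_s leqn0 dist_eq0.
case: size_s => size_s; case/andP: path_s => exz path_s.
apply: leq_trans (dist_triangle x z y) _; rewrite edge_dist in exz.
rewrite (eqP exz) add1n ltnS.
by apply: IHn; exists s.
Qed.

Lemma geodesicP x s : geodesic e (x :: s) <-> path e x s /\ d x (last x s) = size s.
Proof.
split=> [[path_s short] | [path_s dxs]]; last first.
  by split=> // n lt_ns /dist_le_walk_len; rewrite dxs leqNgt lt_ns.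
split=> //; apply/eqP; rewrite eqn_leq dist_le_walk_len; last by exists s.
by rewrite leqNgt; apply/negP => lt_ds; apply: (short _ lt_ds); apply: walk_len_dist.
Qed.

Lemma geodesic_transitive_frames (std : nat -> seq T) :
  (forall x s, path e x s -> d x (last x s) = size s ->
     exists2 f : T -> T, (forall y z, d (f y) (f z) = d y z) &
                         map f (std (size s)) = x :: s) ->
  geodesic_transitive e.
Proof.
have isometry_perm f : (forall y z, d (f y) (f z) = d y z) ->
    {g : {perm T} | graph_aut e g & g =1 f}.
  move=> isof; have injf : injective f.
    by move=> y z /eqP; rewrite -dist_eq0 isof dist_eq0 => /eqP.
  by exists (perm injf) => [y z|y]; rewrite !permE // !edge_dist isof.
move=> frame [|x s] [|y t] // [eq_size] /geodesicP[px dx] /geodesicP[py dy].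
have [f1 /isometry_perm[g1 aut1 g1E] std1] := frame x s px dx.
have [f2 /isometry_perm[g2 aut2 g2E] std2] := frame y t py dy.
exists (g1^-1 * g2)%g; split=> [a b|]; first by rewrite !permM aut2 -aut1 !permKV.
rewrite -std1 -std2 -eq_size -(eq_map g1E) -(eq_map g2E) -map_comp.
by apply: eq_map => a /=; rewrite permM permK.
Qed.

End DistanceGraph.

Section RankDistance.
Variables (F : fieldType) (m n c : nat) (T : finType) (emb : T -> 'M[F]_(m, n)) (e : rel T).
Hypotheses (emb_inj : injective emb) (c_gt0 : (0 < c)%N).
Hypothesis dvdn_rank : forall x y, (c %| \rank (emb x - emb y)%R)%N.
Hypothesis edge_rank : forall x y, e x y = (\rank (emb x - emb y) == c).
Hypothesis rank_step : forall x y, x != y ->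
  exists2 z, e x z & (\rank (emb z - emb y)%R + c)%N = \rank (emb x - emb y).

Let rdist x y := (\rank (emb x - emb y)%R %/ c)%N.

Lemma rank_geodesic_transitive (std : nat -> nat -> T) :
  (forall (xs : nat -> T) l, (forall j, (j < l)%N -> e (xs j) (xs j.+1)) ->
     \rank (emb (xs l) - emb (xs 0%N)) = (c * l)%N ->
     exists2 f : T -> T,
       (forall y z, \rank (emb (f y) - emb (f z)) = \rank (emb y - emb z)) &
       forall i, (i <= l)%N -> f (std l i) = xs i) ->
  geodesic_transitive e.
Proof.
have rankK x y : (rdist x y * c)%N = \rank (emb x - emb y) by rewrite divnK.
move=> frame.
apply: (@geodesic_transitive_frames _ _ rdist _ _ _ _ (fun l => mkseq (std l) l.+1)).
- by move=> x y; rewrite edge_rank -rankK -{2}[c]mul1n eqn_mul2r (gtn_eqF c_gt0).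
- move=> x y; rewrite -(inj_eq emb_inj) -subr_eq0 -mxrank_eq0 -rankK muln_eq0.
  by rewrite (gtn_eqF c_gt0) orbF.
- move=> x y z; rewrite -(leq_pmul2r c_gt0) mulnDl !rankK.
  by rewrite -[emb x - emb z](subrKA (emb y)) mxrank_add.
- move=> x y k dxy; have ne_xy : x != y.
    by apply/eqP=> eq_xy; move: dxy; rewrite eq_xy /rdist subrr mxrank0 div0n.
  have [z exz rank_zy] := rank_step ne_xy; exists z => //.
  by rewrite /rdist -rank_zy divnDr // divnn c_gt0 addn1 in dxy; case: dxy.
move=> x s path_s dist_s.
pose xs i := nth x (x :: s) i.
have steps j : (j < size s)%N -> e (xs j) (xs j.+1) by move/pathP: path_s => /(_ x j).
have rank_s : \rank (emb (xs (size s)) - emb (xs 0%N)) = (c * size s)%N.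
  by rewrite /xs /= nth_last mulnC -dist_s rankK -mxrank_opp opprB.
have [f isof fE] := frame xs _ steps rank_s.
exists f => [y z|]; first by rewrite /rdist isof.
apply: (@eq_from_nth _ x); first by rewrite size_map size_mkseq.
move=> i; rewrite size_map size_mkseq ltnS => le_is.
by rewrite (nth_map x) ?size_mkseq ?ltnS // nth_mkseq ?ltnS // fE.
Qed.

End RankDistance.

Section RankReduction.
Variable F : fieldType.

Lemma mxrank_affine m n (X A B : 'M[F]_(m, n)) (P : 'M_m) (Q : 'M_n) :
  P \in unitmx -> Q \in unitmx ->
  \rank ((X + P *m A *m Q) - (X + P *m B *m Q)) = \rank (A - B).
Proof.
move=> uP uQ; rewrite [X + _]addrC addrKA -mulmxBl -mulmxBr.
by rewrite mxrankMfree ?row_free_unit // (eqmxMfull _ _) ?row_full_unit.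
Qed.

Lemma mxrank_wedderburn m n r
    (A : 'M[F]_(m, n)) (X : 'M_(r, m)) (Y : 'M_(n, r)) (N : 'M_r) :
  X *m A *m Y *m N = 1%:M ->
  (\rank (A - A *m Y *m N *m X *m A)%R + r)%N = \rank A /\
  \rank (A *m Y *m N *m X *m A) = r.
Proof.
move=> XAYN1; set R := A *m Y *m N *m X *m A.
have rank_XA : \rank (X *m A) = r.
  by apply/eqP/row_freeP; exists (Y *m N); rewrite !mulmxA.
have kerXA : (X *m A <= A :&: kermx (1%:M - Y *m N *m X *m A))%MS.
  rewrite sub_capmx submxMl; apply/sub_kermxP.
  by rewrite mulmxBr mulmx1 !mulmxA XAYN1 mul1mx subrr.
have le_sub : (\rank (A - R)%R + r <= \rank A)%N.
  rewrite -[X in (_ <= X)%N](mxrank_mul_ker A (1%:M - Y *m N *m X *m A)).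
  by rewrite mulmxBr mulmx1 !mulmxA leq_add2l -{1}rank_XA mxrankS.
have le_R : (\rank R <= r)%N.
  by rewrite /R -(mulmxA _ X) (leq_trans (mxrankM_maxr _ _)) ?rank_XA.
have le_A : (\rank A <= \rank (A - R)%R + \rank R)%N.
  by rewrite -{1}(subrK R A) mxrank_add.
lia.
Qed.

Lemma eq_of_mxrank_sub m n (A R : 'M[F]_(m, n)) r :
  (\rank (A - R)%R + r)%N = \rank A -> \rank A = r -> A = R.
Proof.
by move=> <- /eqP; rewrite -{2}[r]add0n eqn_add2r mxrank_eq0 subr_eq0 => /eqP.
Qed.

Lemma delta_mulmx_delta m n (A : 'M[F]_(m, n)) i j :
  (delta_mx 0 i : 'rV_m) *m A *m (delta_mx j 0 : 'cV_n) = (A i j)%:M.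
Proof. by rewrite -rowE -colE [LHS]mx11_scalar !mxE. Qed.

End RankReduction.

Section PidFrames.
Variable F : fieldType.

Lemma telescope_sumr_ord (V : zmodType) (x : nat -> V) l i : (i <= l)%N ->
  x i - x 0%N = \sum_(j < l | (j < i)%N) (x j.+1 - x j).
Proof.
move=> le_il; rewrite -(big_ord_widen _ (fun j => x j.+1 - x j) le_il).
by rewrite -(big_mkord xpredT (fun j => x j.+1 - x j)) telescope_sumr.
Qed.

Lemma mulmx_pid_sum l m n i (A : 'M[F]_(l, m)) (B : 'M_(l, n)) :
  A^T *m pid_mx i *m B = \sum_(j < l | (j < i)%N) (row j A)^T *m row j B.
Proof.
have -> : pid_mx i = \sum_(j < l | (j < i)%N) delta_mx j j :> 'M[F]_l.
  apply/matrixP => a b; rewrite summxE !mxE; under eq_bigr do rewrite mxE.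
  rewrite big_mkcond (bigD1 a) //= big1 => [|j ne_ja].
    by rewrite eqxx addr0 eq_sym andbC; case: (a < i)%N.
  by rewrite eq_sym (negbTE ne_ja) if_same.
rewrite mulmx_sumr mulmx_suml; apply: eq_bigr => j _.
by rewrite -(mul_delta_mx (0 : 'I_1)) mulmxA -colE -mulmxA -rowE tr_row.
Qed.

Lemma row_free_pid_mulmx l n (V : 'M[F]_(l, n)) :
  row_free V -> exists2 Q : 'M_n, Q \in unitmx & V = pid_mx l *m Q.
Proof.
move=> freeV; have le_ln : (l <= n)%N by rewrite -(eqP freeV) rank_leq_col.
have pidV : (pid_mx l : 'M_(l, n)) *m ((pid_mx l : 'M_(n, l)) *m V) = V.
  by rewrite mulmxA pid_mx_id // pid_mx_1 mul1mx.
have [|Q uQ VQ] := @complete_unitmx F l n (pid_mx l) ((pid_mx l : 'M_(n, l)) *m V).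
  by rewrite pidV (eqP freeV) rank_pid_mx.
by exists Q; rewrite // -VQ pidV.
Qed.

Lemma mxrankM_row_free k l n (A : 'M[F]_(k, l)) (B : 'M_(l, n)) :
  \rank (A *m B) = l -> row_free B.
Proof. by move=> rAB; rewrite -row_leq_rank -{1}rAB mxrankM_maxr. Qed.

Lemma pid_mx_sandwich m n l i (P : 'M[F]_m) (Q : 'M_n) : (i <= l)%N ->
  ((pid_mx l : 'M_(l, m)) *m P)^T *m (pid_mx i : 'M_l) *m (pid_mx l *m Q) =
  P^T *m pid_mx i *m Q.
Proof.
move=> le_il.
have pid_i : (pid_mx l : 'M[F]_(m, l)) *m pid_mx i *m (pid_mx l : 'M_(l, n)) = pid_mx i.
  by rewrite !mul_pid_mx; congr pid_mx; lia.
by rewrite -pid_i trmx_mul tr_pid_mx !mulmxA.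
Qed.

End PidFrames.

Section BilinearForms.
Variable F : fieldType.

Lemma rank_one_reduction m n (A : 'M[F]_(m, n)) : A != 0 ->
  exists (u : 'rV_m) (v : 'rV_n),
    (\rank (A - u^T *m v)%R + 1)%N = \rank A /\ \rank (u^T *m v) = 1%N.
Proof.
case/matrix0Pn=> i [j aij_neq0].
have XAYN1 : (delta_mx 0 i : 'rV_m) *m A *m delta_mx j 0 *m (A i j)^-1%:M = 1%:M.
  by rewrite delta_mulmx_delta -scalar_mxM mulfV.
exists (A *m delta_mx j 0 *m (A i j)^-1%:M)^T, (delta_mx 0 i *m A).
by rewrite trmxK !mulmxA; exact: mxrank_wedderburn XAYN1.
Qed.

Lemma rank_one_frame m n l (x : nat -> 'M[F]_(m, n)) :
  (forall j, (j < l)%N -> \rank (x j.+1 - x j) = 1%N) -> \rank (x l - x 0%N) = l ->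
  exists2 P : 'M_m, P \in unitmx & exists2 Q : 'M_n, Q \in unitmx &
    forall i, (i <= l)%N -> x i - x 0%N = P^T *m pid_mx i *m Q.
Proof.
move=> rank_steps rank_l.
have /fin_all_exists[uv uvE] : forall j : 'I_l,
    exists uv : 'rV_m * 'rV_n, x j.+1 - x j = uv.1^T *m uv.2.
  move=> j; have rank_j := rank_steps j (ltn_ord j).
  have [|u [v [rank_sub _]]] := rank_one_reduction (A := x j.+1 - x j).
    by rewrite -mxrank_eq0 rank_j.
  by exists (u, v); exact: eq_of_mxrank_sub rank_sub rank_j.
pose U := \matrix_j (uv j).1; pose V := \matrix_j (uv j).2.
have xE i : (i <= l)%N -> x i - x 0%N = U^T *m pid_mx i *m V.
  move=> le_il; rewrite mulmx_pid_sum (telescope_sumr_ord _ le_il).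
  by apply: eq_bigr => j _; rewrite !rowK uvE.
have rank_UV : \rank (U^T *m V) = l.
  by have := xE l (leqnn l); rewrite pid_mx_1 mulmx1 => <-.
have rank_VU : \rank (V^T *m U) = l by rewrite -mxrank_tr trmx_mul trmxK.
have [P uP UE] := row_free_pid_mulmx (mxrankM_row_free rank_VU).
have [Q uQ VE] := row_free_pid_mulmx (mxrankM_row_free rank_UV).
by exists P => //; exists Q => // i le_il; rewrite xE // UE VE pid_mx_sandwich.
Qed.

End BilinearForms.

Lemma bil_geodesic_transitive (F : finFieldType) m n : geodesic_transitive (@bil_adj F m n).
Proof.
apply: (@rank_geodesic_transitive F m n 1 _ id _ _ _ _ _ _ (fun _ i => pid_mx i)) => //.
- move=> x y ne_xy; have [|u [v [rank_sub rank_uv]]] := rank_one_reduction (A := x - y).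
    by rewrite subr_eq0.
  exists (x - u^T *m v); last by rewrite addrAC.
  by rewrite /bil_adj subKr rank_uv.
move=> xs l adj rank_l.
have rank_steps j : (j < l)%N -> \rank (xs j.+1 - xs j) = 1%N.
  by move/adj; rewrite /bil_adj -mxrank_opp opprB => /eqP.
have [P uP [Q uQ xsE]] := rank_one_frame rank_steps (etrans rank_l (mul1n l)).
exists (fun X => xs 0%N + P^T *m X *m Q) => [Y Z|i le_il].
  by rewrite mxrank_affine ?unitmx_tr.
by rewrite -xsE // addrC subrK.
Qed.

Section AlternatingForms.
Variable F : finFieldType.

Lemma alternatingP k (A : 'M[F]_k) : reflect (exists B, A = B - B^T) (alternating A).
Proof.
apply: (iffP andP) => [[/eqP trA /forallP diagA] | [B ->]]; last first.
  by split; [rewrite linearB /= trmxK opprB | apply/forallP => i; rewrite !mxE subrr].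
have skewA a b : A b a = - A a b.
  by have := congr1 (fun M : 'M[F]_k => M a b) trA; rewrite !mxE.
exists (\matrix_(a, b) if (a < b)%N then A a b else 0).
apply/matrixP => a b; rewrite !mxE; case: ltngtP => [//|lt_ba|/val_inj eq_ab].
- by rewrite subr0.
- by rewrite sub0r skewA.
- by rewrite eq_ab (eqP (diagA b)) subrr.
Qed.

Lemma alternating_wedge k (p q : 'rV[F]_k) : alternating (p^T *m q - q^T *m p).
Proof. by apply/alternatingP; exists (p^T *m q); rewrite trmx_mul trmxK. Qed.

Lemma alternatingD k (A B : 'M[F]_k) : alternating A -> alternating B -> alternating (A + B).
Proof.
move=> /alternatingP[A' ->] /alternatingP[B' ->]; apply/alternatingP; exists (A' + B').
by rewrite linearD /= opprD addrACA.
Qed.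

Lemma alternatingB k (A B : 'M[F]_k) : alternating A -> alternating B -> alternating (A - B).
Proof.
move=> altA /alternatingP[B' ->]; apply: alternatingD altA _.
by apply/alternatingP; exists B'^T; rewrite trmxK opprB.
Qed.

Lemma alternating_congr k n (Q : 'M[F]_(n, k)) (A : 'M_n) :
  alternating A -> alternating (Q^T *m A *m Q).
Proof.
case/alternatingP=> B ->; apply/alternatingP; exists (Q^T *m B *m Q).
by rewrite mulmxBr mulmxBl !trmx_mul trmxK mulmxA.
Qed.

Lemma alternating_rank_two_reduction k (A : 'M[F]_k) : alternating A -> A != 0 ->
  exists p q : 'rV_k, (\rank (A - (p^T *m q - q^T *m p))%R + 2)%N = \rank A /\
                      \rank (p^T *m q - q^T *m p) = 2%N.
Proof.
move=> /andP[/eqP trA /forallP diagA] /matrix0Pn[i [j aij_neq0]].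
set a := A i j in aij_neq0.
have colA t : col t A = - (row t A)^T by rewrite tr_row trA linearN /= opprK.
have Aji : A j i = - a by have := congr1 (fun M : 'M[F]_k => M i j) trA; rewrite !mxE.
pose X : 'M[F]_(1 + 1, k) := col_mx (delta_mx 0 i) (delta_mx 0 j).
pose Y : 'M[F]_(k, 1 + 1) := row_mx (delta_mx j 0) (- delta_mx i 0).
have XAYN1 : X *m A *m Y *m a^-1%:M = 1%:M.
  rewrite mul_col_mx mul_col_row !mulmxN !delta_mulmx_delta.
  rewrite (eqP (diagA i)) (eqP (diagA j)).
  by rewrite Aji raddfN opprK raddf0 oppr0 -/a -scalar_mx_block -scalar_mxM mulfV.
have [rank_sub rank_R] := mxrank_wedderburn XAYN1.
exists (a^-1 *: row i A), (row j A).
suff -> : (a^-1 *: row i A)^T *m row j A - (row j A)^T *m (a^-1 *: row i A) =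
          A *m Y *m a^-1%:M *m X *m A by [].
rewrite -(mulmxA _ X) mul_col_mx -!rowE mul_mx_scalar mul_mx_row mulmxN -!colE !colA.
rewrite -scalemxAl mul_row_col mulNmx opprK linearZ /= -scalemxAl -scalemxAr.
by rewrite -scalerBr addrC.
Qed.

Lemma alternating_rank_even k (A : 'M[F]_k) : alternating A -> ~~ odd (\rank A).
Proof.
elim: (\rank A).+1 {-2}A (ltnSn (\rank A)) => // r IHr {}A lt_Ar altA.
have [->|A_neq0] := eqVneq A 0; first by rewrite mxrank0.
have [p [q [rank_sub _]]] := alternating_rank_two_reduction altA A_neq0.
rewrite -rank_sub addn2 /= negbK; apply: IHr.
  by move: lt_Ar; rewrite -rank_sub addn2 ltnS => /ltnW.
exact: alternatingB altA (alternating_wedge p q).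
Qed.

Definition sympl_mx l i : 'M[F]_(l + l) := block_mx 0 (pid_mx i) (- pid_mx i) 0.

Definition alt_pid_mx k l i : 'M[F]_k :=
  (pid_mx (l + l) : 'M_(l + l, k))^T *m sympl_mx l i *m pid_mx (l + l).

Lemma alternating_alt_pid k l i : alternating (alt_pid_mx k l i).
Proof.
apply: alternating_congr; apply/alternatingP; exists (block_mx 0 (pid_mx i) 0 0).
by rewrite tr_block_mx !trmx0 tr_pid_mx opp_block_mx add_block_mx !oppr0 !addr0 add0r.
Qed.

Lemma mulmx_sympl l n i (P Q : 'M[F]_(l, n)) :
  (col_mx P Q)^T *m sympl_mx l i *m col_mx P Q =
  P^T *m pid_mx i *m Q - Q^T *m pid_mx i *m P.
Proof.
rewrite tr_col_mx mul_row_block !mulmx0 add0r addr0 mul_row_col mulmxN mulNmx.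
by rewrite addrC.
Qed.

Lemma alternating_frame k l (x : nat -> 'M[F]_k) :
  (forall j, (j < l)%N -> alternating (x j.+1 - x j) /\ \rank (x j.+1 - x j) = 2%N) ->
  \rank (x l - x 0%N) = (2 * l)%N ->
  exists2 Q : 'M_k, Q \in unitmx &
    forall i, (i <= l)%N -> x i - x 0%N = Q^T *m alt_pid_mx k l i *m Q.
Proof.
move=> steps rank_l.
have /fin_all_exists[pq pqE] : forall j : 'I_l,
    exists pq : 'rV_k * 'rV_k, x j.+1 - x j = pq.1^T *m pq.2 - pq.2^T *m pq.1.
  move=> j; have [alt_j rank_j] := steps j (ltn_ord j).
  have [|p [q [rank_sub _]]] := alternating_rank_two_reduction alt_j.
    by rewrite -mxrank_eq0 rank_j.
  by exists (p, q); exact: eq_of_mxrank_sub rank_sub rank_j.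
pose W := col_mx (\matrix_j (pq j).1) (\matrix_j (pq j).2).
have xE i : (i <= l)%N -> x i - x 0%N = W^T *m sympl_mx l i *m W.
  move=> le_il; rewrite mulmx_sympl !mulmx_pid_sum -sumrB (telescope_sumr_ord _ le_il).
  by apply: eq_bigr => j _; rewrite !rowK pqE.
have rank_W : \rank (W^T *m sympl_mx l l *m W) = (l + l)%N.
  by rewrite -xE // rank_l mul2n addnn.
have [Q uQ WE] := row_free_pid_mulmx (mxrankM_row_free rank_W).
by exists Q => // i le_il; rewrite xE // WE trmx_mul !mulmxA.
Qed.

End AlternatingForms.

Lemma alt_geodesic_transitive (F : finFieldType) k : geodesic_transitive (@alt_adj F k).
Proof.
pose std l i : alt_vertex F k := exist _ (alt_pid_mx F k l i) (alternating_alt_pid F k l i).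
apply: (@rank_geodesic_transitive F k k 2 _ val _ _ _ _ _ _ std) => //.
- exact: val_inj.
- by move=> x y; rewrite dvdn2 alternating_rank_even ?alternatingB ?valP.
- move=> x y ne_xy; have altA := alternatingB (valP x) (valP y).
  have [|p [q [rank_sub rank_pq]]] := alternating_rank_two_reduction altA.
    by rewrite subr_eq0 (inj_eq val_inj).
  pose z : alt_vertex F k := exist _ (val x - (p^T *m q - q^T *m p))
    (alternatingB (valP x) (alternating_wedge p q)).
  by exists z; rewrite /alt_adj /= ?subKr ?rank_pq // addrAC.
move=> xs l adj rank_l.
have steps j : (j < l)%N -> alternating (val (xs j.+1) - val (xs j)) /\
                           \rank (val (xs j.+1) - val (xs j)) = 2%N.
  move=> lt_jl; split; first exact: alternatingB (valP _) (valP _).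
  by move: (adj j lt_jl); rewrite /alt_adj -mxrank_opp opprB => /eqP.
have [Q uQ xsE] := alternating_frame (x := fun i => val (xs i)) steps rank_l.
pose f (X : alt_vertex F k) : alt_vertex F k :=
  exist _ (val (xs 0%N) + Q^T *m val X *m Q)
    (alternatingD (valP (xs 0%N)) (alternating_congr Q (valP X))).
exists f => [Y Z|i le_il]; first by rewrite mxrank_affine ?unitmx_tr.
by apply: val_inj; rewrite /= -xsE // addrC subrK.
Qed.

Lemma card_mul_fibers (F : finFieldType) (f : F -> F) :
  {morph f : x y / x * y} -> (forall x, x != 0 -> f x != 0) ->
  #|[set x : F | x != 0]| =
    (#|f @: [set x : F | x != 0%R]| * #|[set x : F | (x != 0%R) && (f x == 1%R)]|)%N.
Proof.
move=> fM f_neq0; set G := [set x : F | x != 0]; set K := [set x | _ && _].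
rewrite -sum1_card (partition_big_imset f) /= -sum_nat_const.
apply: eq_bigr => _ /imsetP[x0 Gx0 ->]; rewrite inE in Gx0.
have fiberE : [set x | (x \in G) && (f x == f x0)] = [set x0 * t | t in K].
  apply/setP => x; rewrite inE; apply/andP/imsetP => [[Gx /eqP fx] | [t Kt ->]].
    exists (x0^-1 * x); last by rewrite mulVKf.
    rewrite inE mulf_neq0 ?invr_eq0 //=; last by rewrite inE in Gx.
    by apply/eqP/(mulfI (f_neq0 _ Gx0)); rewrite -fM mulVKf // fx mulr1.
  rewrite !inE in Kt *; case/andP: Kt => t_neq0 /eqP ft.
  by rewrite mulf_neq0 // fM ft mulr1.
by rewrite sum1dep_card fiberE card_imset //; apply: mulfI.
Qed.

Section Norm.
Variables (F : finFieldType) (sigma : {rmorphism F -> F}).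
Hypotheses (sigmaK : involutive sigma) (sigma_nontrivial : exists z, sigma z != z).

Lemma norm_surjective (c : F) : c != 0 -> sigma c = c -> exists b, b * sigma b = c.
Proof.
move=> c_neq0 sigma_c; pose N x := x * sigma x; pose phi x := x / sigma x.
set G := [set x : F | x != 0]; set K := [set x : F | (x != 0) && (sigma x == x)].
have sigma_neq0 x : x != 0 -> sigma x != 0 by rewrite fmorph_eq0.
have NM : {morph N : x y / x * y} by move=> x y; rewrite /N rmorphM mulrACA.
have phiM : {morph phi : x y / x * y} by move=> x y; rewrite /phi rmorphM invfM mulrACA.
have N_neq0 x : x != 0 -> N x != 0 by move=> x_neq0; rewrite mulf_neq0 ?sigma_neq0.
have phi_neq0 x : x != 0 -> phi x != 0.
  by move=> x_neq0; rewrite mulf_neq0 ?invr_eq0 ?sigma_neq0.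
have NG_K : N @: G \subset K.
  apply/subsetP => _ /imsetP[x Gx ->]; rewrite !inE in Gx *.
  by rewrite N_neq0 //= rmorphM sigmaK mulrC.
have ker_phi : [set x | (x != 0) && (phi x == 1)] = K.
  apply/setP => x; rewrite !inE; have [//|x_neq0 /=] := eqVneq x 0.
  rewrite /phi -[1 in RHS in _ == RHS](divr1 1) eqr_div ?oner_eq0 ?sigma_neq0 //.
  by rewrite mulr1 mul1r eq_sym.
have hilbert90 : [set x | (x != 0) && (N x == 1)] \subset phi @: G.
  apply/subsetP => h; rewrite inE => /andP[h_neq0 /eqP Nh].
  pose y a := a + h * sigma a.
  have hy a : h * sigma (y a) = y a.
    by rewrite rmorphD rmorphM sigmaK mulrDr mulrA -/(N h) Nh mul1r addrC.
  have [a ya_neq0] : exists a, y a != 0.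
    have [y1|] := eqVneq (y 1) 0; last by exists 1.
    have [z sz] := sigma_nontrivial; exists z.
    move/eqP: y1; rewrite /y rmorph1 mulr1 addrC addr_eq0 => /eqP ->.
    by rewrite mulN1r subr_eq0 eq_sym.
  apply/imsetP; exists (y a); first by rewrite inE.
  by rewrite /phi -{1}(hy a) mulfK ?sigma_neq0.
have := card_mul_fibers NM N_neq0; have := card_mul_fibers phiM phi_neq0.
rewrite ker_phi -/G => cardG_phi cardG_N.
have phiG_gt0 : (0 < #|phi @: G|)%N.
  by apply/card_gt0P; exists (phi 1); apply: imset_f; rewrite inE oner_eq0.
(* |phi(G)| |K| = |G| = |N(G)| |ker N| <= |N(G)| |phi(G)| *)
have le_K_NG : (#|K| <= #|N @: G|)%N.
  rewrite -(leq_pmul2l phiG_gt0) -cardG_phi cardG_N mulnC leq_mul2r.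
  by rewrite (subset_leq_card hilbert90) orbT.
have /eqP NG_eq_K : N @: G == K by rewrite eqEcard NG_K.
have : c \in K by rewrite inE c_neq0 sigma_c eqxx.
by rewrite -NG_eq_K => /imsetP[b _ ->]; exists b.
Qed.

Lemma trace_nontrivial : exists t, t + sigma t != 0.
Proof.
have [z sz] := sigma_nontrivial.
have [char2|two_neq0] := eqVneq (2 : F) 0; last by exists 1; rewrite rmorph1.
have oppE (a : F) : - a = a.
  by apply/eqP; rewrite eq_sym -addr_eq0 -mulr2n -mulr_natl char2 mul0r.
by exists z; apply: contra sz; rewrite addr_eq0 oppE eq_sym.
Qed.

End Norm.

Section HermitianForms.
Variables (F : finFieldType) (sigma : {rmorphism F -> F}).
Hypotheses (sigmaK : involutive sigma) (sigma_nontrivial : exists z, sigma z != z).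

(* [Defs.hermitian] is qualified because sesquilinear.v also defines [hermitian]. *)
Definition conjT m n (A : 'M[F]_(m, n)) : 'M_(n, m) := (map_mx sigma A)^T.

Lemma conjTM m n p (A : 'M[F]_(m, n)) (B : 'M_(n, p)) :
  conjT (A *m B) = conjT B *m conjT A.
Proof. by rewrite /conjT map_mxM trmx_mul. Qed.

Lemma conjTD m n (A B : 'M[F]_(m, n)) : conjT (A + B) = conjT A + conjT B.
Proof. by rewrite /conjT map_mxD linearD. Qed.

Lemma conjTN m n (A : 'M[F]_(m, n)) : conjT (- A) = - conjT A.
Proof. by rewrite /conjT map_mxN linearN. Qed.

Lemma conjTZ m n a (A : 'M[F]_(m, n)) : conjT (a *: A) = sigma a *: conjT A.
Proof. by rewrite /conjT map_mxZ linearZ. Qed.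

Lemma conjTK m n (A : 'M[F]_(m, n)) : conjT (conjT A) = A.
Proof. by apply/matrixP => i j; rewrite !mxE sigmaK. Qed.

Lemma conjT_delta n (j : 'I_n) : conjT (delta_mx 0 j : 'rV[F]_n) = delta_mx j 0.
Proof. by rewrite /conjT map_delta_mx trmx_delta. Qed.

Lemma hermitianE k (A : 'M[F]_k) : Defs.hermitian sigma A = (conjT A == A).
Proof. by rewrite /Defs.hermitian -(inj_eq trmx_inj) trmxK eq_sym. Qed.

Lemma hermitianD k (A B : 'M[F]_k) :
  Defs.hermitian sigma A -> Defs.hermitian sigma B -> Defs.hermitian sigma (A + B).
Proof. by rewrite !hermitianE conjTD => /eqP-> /eqP->. Qed.

Lemma hermitianB k (A B : 'M[F]_k) :
  Defs.hermitian sigma A -> Defs.hermitian sigma B -> Defs.hermitian sigma (A - B).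
Proof. by rewrite !hermitianE conjTD conjTN => /eqP-> /eqP->. Qed.

Lemma hermitian_congr k n (Q : 'M[F]_(n, k)) (A : 'M_n) :
  Defs.hermitian sigma A -> Defs.hermitian sigma (conjT Q *m A *m Q).
Proof. by rewrite !hermitianE !conjTM conjTK mulmxA => /eqP->. Qed.

Lemma hermitian_gram k (w : 'rV[F]_k) : Defs.hermitian sigma (conjT w *m w).
Proof. by rewrite hermitianE conjTM conjTK. Qed.

Lemma hermitian_pid k i : Defs.hermitian sigma (pid_mx i : 'M[F]_k).
Proof. by rewrite /Defs.hermitian map_pid_mx tr_pid_mx. Qed.

Lemma hermitian_form_fixed k (A : 'M[F]_k) (x : 'rV_k) : Defs.hermitian sigma A ->
  sigma ((x *m A *m conjT x) 0 0) = (x *m A *m conjT x) 0 0.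
Proof.
rewrite hermitianE => /eqP herA.
have : conjT (x *m A *m conjT x) = x *m A *m conjT x by rewrite !conjTM conjTK herA mulmxA.
by move/(congr1 (fun M : 'M_1 => M 0 0)); rewrite !mxE.
Qed.

Lemma hermitian_form_neq0 k (A : 'M[F]_k) : Defs.hermitian sigma A -> A != 0 ->
  exists x : 'rV_k, (x *m A *m conjT x) 0 0 != 0.
Proof.
move=> herA A_neq0.
have entry a b : (delta_mx 0 a : 'rV_k) *m A *m conjT (delta_mx 0 b : 'rV_k) = (A a b)%:M.
  by rewrite conjT_delta delta_mulmx_delta.
have [i Aii_neq0|diagA] := pickP [pred i : 'I_k | A i i != 0].
  by exists (delta_mx 0 i); rewrite entry mxE eqxx mulr1n.
have {}diagA i : A i i = 0 by apply/eqP; have := diagA i; rewrite /= => /negbFE.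
have [i [j aij_neq0]] := matrix0Pn _ A_neq0.
have Aji : A j i = sigma (A i j).
  move: herA; rewrite /Defs.hermitian => /eqP/(congr1 (fun M : 'M_k => M i j)).
  by rewrite !mxE.
(* With a zero diagonal, (e_i + c e_j) A (e_i + c e_j)^* = t + t^sigma when c^sigma A_ij = t. *)
have [t trace_t] := trace_nontrivial sigma_nontrivial.
exists (delta_mx 0 i + sigma (t / A i j) *: delta_mx 0 j).
rewrite conjTD conjTZ !mulmxDl !mulmxDr -!scalemxAl -!scalemxAr !entry !diagA.
by rewrite !mxE !eqxx !mulr1n !mulr0 add0r addr0 sigmaK divfK // Aji -rmorphM divfK.
Qed.

Lemma hermitian_rank_one_reduction k (A : 'M[F]_k) :
  Defs.hermitian sigma A -> A != 0 ->
  exists w : 'rV_k, (\rank (A - conjT w *m w)%R + 1)%N = \rank A /\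
                    \rank (conjT w *m w) = 1%N.
Proof.
move=> herA A_neq0; have [x a_neq0] := hermitian_form_neq0 herA A_neq0.
have conjA : conjT A = A by apply/eqP; rewrite -hermitianE.
set a := (x *m A *m conjT x) 0 0 in a_neq0.
have XAYN1 : x *m A *m conjT x *m a^-1%:M = 1%:M.
  by rewrite [x *m _ *m _]mx11_scalar -scalar_mxM mulfV.
have [b normb] : exists b, b * sigma b = a^-1.
  apply: norm_surjective => //; first by rewrite invr_eq0.
  by rewrite fmorphV hermitian_form_fixed.
exists (b *: (x *m A)).
suff -> : conjT (b *: (x *m A)) *m (b *: (x *m A)) = A *m conjT x *m a^-1%:M *m x *m A.
  exact: mxrank_wedderburn XAYN1.
rewrite conjTZ conjTM conjA.
rewrite -scalemxAl -scalemxAr scalerA mulrC normb mul_mx_scalar.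
by rewrite !scalemxAl mulmxA.
Qed.

Lemma hermitian_frame k l (x : nat -> 'M[F]_k) :
  (forall j, (j < l)%N ->
     Defs.hermitian sigma (x j.+1 - x j) /\ \rank (x j.+1 - x j) = 1%N) ->
  \rank (x l - x 0%N) = l ->
  exists2 Q : 'M_k, Q \in unitmx &
    forall i, (i <= l)%N -> x i - x 0%N = conjT Q *m pid_mx i *m Q.
Proof.
move=> steps rank_l.
have /fin_all_exists[w wE] : forall j : 'I_l,
    exists w : 'rV_k, x j.+1 - x j = conjT w *m w.
  move=> j; have [her_j rank_j] := steps j (ltn_ord j).
  have [|w [rank_sub _]] := hermitian_rank_one_reduction her_j.
    by rewrite -mxrank_eq0 rank_j.
  by exists w; exact: eq_of_mxrank_sub rank_sub rank_j.
pose W := \matrix_j w j.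
have xE i : (i <= l)%N -> x i - x 0%N = conjT W *m pid_mx i *m W.
  move=> le_il; rewrite mulmx_pid_sum (telescope_sumr_ord _ le_il).
  by apply: eq_bigr => j _; rewrite -map_row !rowK wE.
have rank_W : \rank (conjT W *m W) = l.
  by have := xE l (leqnn l); rewrite pid_mx_1 mulmx1 => <-.
have [Q uQ WE] := row_free_pid_mulmx (mxrankM_row_free rank_W).
exists Q => // i le_il.
by rewrite xE // /conjT WE map_mxM map_pid_mx pid_mx_sandwich.
Qed.

End HermitianForms.

Lemma her_geodesic_transitive (F : finFieldType) (sigma : {rmorphism F -> F}) k :
  involutive sigma -> (exists z, sigma z != z) -> geodesic_transitive (@her_adj F sigma k).
Proof.
move=> sigmaK sigma_nontrivial.
pose std (l i : nat) : her_vertex sigma k := exist _ (pid_mx i) (hermitian_pid sigma k i).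
apply: (@rank_geodesic_transitive F k k 1 _ val (@her_adj F sigma k) _ _ _ _ _ std) => //.
- exact: val_inj.
- move=> x y ne_xy; have herA := hermitianB (valP x) (valP y).
  have [|w [rank_sub rank_w]] := hermitian_rank_one_reduction sigmaK sigma_nontrivial herA.
    by rewrite subr_eq0 (inj_eq val_inj).
  pose z : her_vertex sigma k := exist _ (val x - conjT sigma w *m w)
    (hermitianB (valP x) (hermitian_gram sigmaK w)).
  by exists z; rewrite /her_adj /= ?subKr ?rank_w // addrAC.
move=> xs l adj rank_l.
have steps j : (j < l)%N -> Defs.hermitian sigma (val (xs j.+1) - val (xs j)) /\
                           \rank (val (xs j.+1) - val (xs j)) = 1%N.
  move=> lt_jl; split; first exact: hermitianB (valP _) (valP _).
  by move: (adj j lt_jl); rewrite /her_adj -mxrank_opp opprB => /eqP.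
have [Q uQ xsE] := hermitian_frame sigmaK sigma_nontrivial
  (x := fun i => val (xs i)) steps (etrans rank_l (mul1n l)).
pose f (X : her_vertex sigma k) : her_vertex sigma k :=
  exist _ (val (xs 0%N) + conjT sigma Q *m val X *m Q)
    (hermitianD (valP (xs 0%N)) (hermitian_congr sigmaK Q (valP X))).
exists f => [Y Z|i le_il]; first by rewrite mxrank_affine // /conjT unitmx_tr map_unitmx.
by apply: val_inj; rewrite /= -xsE // addrC subrK.
Qed.

Theorem proposition3p8 :
  (forall (F : finFieldType) (m k : nat), (m <= k)%N ->
     geodesic_transitive (@bil_adj F m k)) /\
  (forall (F : finFieldType) (k : nat),
     geodesic_transitive (@alt_adj F k)) /\
  (forall (F : finFieldType) (r k : nat) (sigma : {rmorphism F -> F}),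
     #|F| = (r ^ 2)%N ->
     (forall x, sigma (sigma x) = x) -> (exists x, sigma x != x) ->
     geodesic_transitive (@her_adj F sigma k)).
Proof.
split; first by move=> F m k _; exact: bil_geodesic_transitive.
split; first exact: alt_geodesic_transitive.
by move=> F r k sigma _; exact: her_geodesic_transitive.
Qed.
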